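(* Let $\phi:\mathbb{N}\to\mathbb{N}$ satisfy $\phi(n)\to\infty$ as $n\to\infty$. Then there is no triple $(f,A,P)$, where $f$ assigns a binary string $f(C_n)$ of length at most $\log\log\log n-\phi(n)$ to the $n$-node oriented ring $C_n$ (for all sufficiently large $n$), $A$ is a deterministic exploration algorithm and $P$ is a polynomial, such that for every sufficiently large $n$ the agent executing $A$ with input $f(C_n)$, starting at a node of $C_n$, visits all nodes of $C_n$ and stops after at most $P(n)$ edge traversals. In particular, neither a map oracle nor an instance oracle giving advice of size at most $\log\log\log n-\phi(n)$ permits exploration of all $n$-node oriented rings in time polynomial in $n$.
   Context: Model: a graph is a simple connected undirected graph with $n$ nodes. Nodes are unlabeled; at each node of degree $d$ the incident edges carry distinct port numbers $0,\dots,d-1$. A mobile agent starts at some node. At each step, located at a node $u$ whose degree it knows, it chooses a port at $u$ and traverses the corresponding edge to a neighbor $w$; upon arrival it learns the port number of this edge at $w$ and the degree of $w$. The agent must visit all nodes and stop; the time is the number of edge traversals. A deterministic exploration algorithm receives as input a binary string (advice); the size of advice is its length. A map oracle assigns advice to each port-numbered graph; an instance oracle assigns advice to each pair (graph, starting node). An oriented ring is a cycle in which at every node the ports $0$ and $1$ are in clockwise order (so all nodes look identical). Logarithms are to base 2. *)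

From Stdlib Require Import Reals Lra Lia List.
Import ListNotations.
Open Scope R_scope.

Definition log2R (x : R) : R := ln x / ln 2.

(* A real polynomial given by its coefficient list [a0; a1; ...; ad],
   evaluated by Horner's rule. *)
Definition poly_eval (P : list R) (x : R) : R :=
  fold_right (fun a acc => a + x * acc) 0 P.

(* Observation after a traversal: (port number of the edge at the arrival
   node, degree of the arrival node). *)
Definition obs := (nat * nat)%type.

(* A deterministic exploration algorithm with advice: given the advice
   string, the degree of the starting node and the history of observations
   so far, it either stops (None) or chooses a port (Some p). *)
Definition algo := list bool -> nat -> list obs -> option nat.

(* The n-node oriented ring C_n: nodes 0..n-1 in clockwise order; at every
   node port 0 leads to the clockwise neighbour and port 1 to the
   counterclockwise one.  Hence the edge {i, i+1 mod n} has port 0 at i and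
   port 1 at i+1 mod n; every node has degree 2. *)
Definition ring_move (n p q : nat) : nat :=
  if Nat.eqb q 0 then Nat.modulo (p + 1) n else Nat.modulo (p + n - 1) n.

Definition ring_arrival_port (q : nat) : nat :=
  if Nat.eqb q 0 then 1%nat else 0%nat.

(* Configuration (current node, history) of the agent executing [A] with
   advice [adv] on C_n from start node [s], after k traversals; None if the
   agent stopped earlier or chose an invalid port. *)
Fixpoint ring_config (A : algo) (adv : list bool) (n s : nat) (k : nat)
  : option (nat * list obs) :=
  match k with
  | O => Some (s, [])
  | S k' =>
      match ring_config A adv n s k' with
      | None => None
      | Some (p, h) =>
          match A adv 2%nat h with
          | None => None
          | Some q =>
              if Nat.ltb q 2 then
                Some (ring_move n p q, h ++ [(ring_arrival_port q, 2%nat)])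
              else None
          end
      end
  end.

Definition ring_explores (A : algo) (adv : list bool) (n s : nat) (T : R) : Prop :=
  exists t : nat,
    INR t <= T /\
    (exists p h, ring_config A adv n s t = Some (p, h) /\ A adv 2%nat h = None) /\
    (forall v : nat, (v < n)%nat ->
       exists i p h, (i <= t)%nat /\ ring_config A adv n s i = Some (p, h) /\ p = v).

(* All nodes of an oriented ring look alike, so the observations of the agent,
   and hence its whole run, depend only on the advice and not on the size of
   the ring or on the starting node.  A run that stops after t steps visits at
   most t + 1 nodes, so one advice string can serve rings of sizes a < b only
   if b <= P(a) + 1.  The rings of sizes 2^2^(K + D j), j = 0..K, where
   P(n) <= n^D, are pairwise too far apart for that and need K + 1 distinct
   advice strings; but log log log of these sizes is log (K + D j) <= log ((D+1) K),
   and the extra D + 3 bits taken away by phi leave fewer than K strings. *)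

From Stdlib Require Import Reals Lra Lia List Arith.
Import ListNotations.
Open Scope R_scope.

Lemma ring_config_history_indep A adv n s n' s' k p h :
  ring_config A adv n s k = Some (p, h) ->
  exists p', ring_config A adv n' s' k = Some (p', h).
Proof.
  revert p h; induction k as [|k IH]; intros p h Hk; simpl in *.
  - inversion Hk; subst; eauto.
  - destruct (ring_config A adv n s k) as [[p0 h0]|]; [|discriminate].
    destruct (IH _ _ eq_refl) as [p1 ->].
    destruct (A adv 2%nat h0) as [q|]; [|discriminate].
    destruct (Nat.ltb q 2); [|discriminate].
    inversion Hk; subst; eauto.
Qed.

Lemma ring_config_none_mono A adv n s k k' :
  ring_config A adv n s k = None -> (k <= k')%nat ->
  ring_config A adv n s k' = None.
Proof. intros Hk Hkk'; induction Hkk'; simpl; [|rewrite IHHkk']; auto. Qed.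

Lemma ring_config_stop_time_le A adv n s n' s' t t' p h p' h' :
  ring_config A adv n s t = Some (p, h) -> A adv 2%nat h = None ->
  ring_config A adv n' s' t' = Some (p', h') -> (t' <= t)%nat.
Proof.
  intros Ht Hstop Ht'.
  destruct (le_lt_dec t' t) as [|Hlt]; auto; exfalso.
  destruct (ring_config_history_indep A adv n s n' s' t p h Ht) as [p1 Ht1].
  assert (Hend : ring_config A adv n' s' (S t) = None)
    by (simpl; rewrite Ht1, Hstop; reflexivity).
  rewrite (ring_config_none_mono _ _ _ _ _ _ Hend Hlt) in Ht'; discriminate.
Qed.

Lemma range_cover_le (g : nat -> nat) n t :
  (forall v, (v < n)%nat -> exists i, (i <= t)%nat /\ g i = v) -> (n <= S t)%nat.
Proof.
  intros Hcov.
  assert (Hincl : incl (seq 0 n) (map g (seq 0 (S t)))).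
  { intros v Hv; apply in_seq in Hv.
    destruct (Hcov v ltac:(lia)) as [i [Hi Hg]].
    apply in_map_iff; exists i; split; [exact Hg | apply in_seq; lia]. }
  pose proof (NoDup_incl_length (seq_NoDup n 0) Hincl) as Hle.
  rewrite length_map, !length_seq in Hle; exact Hle.
Qed.

Lemma ring_explores_size_bound A adv n s T m s' T' :
  ring_explores A adv n s T -> ring_explores A adv m s' T' -> INR m <= T + 1.
Proof.
  intros [t [HtT [[p [h [Ht Hstop]]] _]]] [t' [_ [[p' [h' [Ht' _]]] Hcov]]].
  pose proof (ring_config_stop_time_le _ _ _ _ _ _ _ _ _ _ _ _ Ht Hstop Ht') as Htt.
  assert (Hm : (m <= S t')%nat).
  { apply (range_cover_le (fun k => match ring_config A adv m s' k with
                                    | Some (q, _) => q | None => 0%nat end)).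
    intros v Hv; destruct (Hcov v Hv) as [k [q [hk [Hk [Hck ->]]]]].
    exists k; rewrite Hck; auto. }
  apply le_INR in Hm; apply le_INR in Htt; rewrite S_INR in Hm; lra.
Qed.

Fixpoint bool_lists_upto (l : nat) : list (list bool) :=
  match l with
  | O => [[]]
  | S l' => [] :: map (cons true) (bool_lists_upto l')
                ++ map (cons false) (bool_lists_upto l')
  end.

Lemma length_bool_lists_upto l : (length (bool_lists_upto l) + 1 = 2 ^ S l)%nat.
Proof. induction l; simpl in *; [|rewrite length_app, !length_map]; lia. Qed.

Lemma in_bool_lists_upto l (w : list bool) :
  (length w <= l)%nat -> In w (bool_lists_upto l).
Proof.
  revert w; induction l as [|l IH]; intros [|b w] Hw; simpl in *; auto; try lia.
  right; apply in_or_app; destruct b; [left|right]; apply in_map, IH; lia.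
Qed.

Lemma short_bool_lists_not_injective (g : nat -> list bool) m :
  (forall j, (j <= m)%nat -> (2 ^ S (length (g j)) <= m)%nat) ->
  ~ (forall i j, (i < j <= m)%nat -> g i <> g j).
Proof.
  intros Hshort Hinj.
  set (l := (Nat.log2 m - 1)%nat).
  assert (Hm : (2 <= m)%nat)
    by (specialize (Hshort 0%nat (Nat.le_0_l m)); simpl in Hshort;
        pose proof (Nat.pow_nonzero 2 (length (g 0%nat))); lia).
  assert (Hlog : (1 <= Nat.log2 m)%nat) by (apply Nat.log2_le_pow2; simpl; lia).
  assert (Hincl : incl (map g (seq 0 (S m))) (bool_lists_upto l)).
  { intros w Hw; apply in_map_iff in Hw; destruct Hw as [j [<- Hj]].
    apply in_seq in Hj; apply in_bool_lists_upto.
    pose proof (proj1 (Nat.log2_le_pow2 m _ ltac:(lia)) (Hshort j ltac:(lia))).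
    unfold l; lia. }
  assert (Hnodup : NoDup (map g (seq 0 (S m)))).
  { apply NoDup_map_NoDup_ForallPairs; [|apply seq_NoDup].
    intros i j Hi Hj Heq; apply in_seq in Hi, Hj.
    destruct (lt_eq_lt_dec i j) as [[Hij|]|Hji]; auto; exfalso.
    - apply (Hinj i j); auto; lia.
    - apply (Hinj j i); auto; lia. }
  pose proof (NoDup_incl_length Hnodup Hincl) as Hcard.
  rewrite length_map, length_seq in Hcard.
  pose proof (length_bool_lists_upto l).
  pose proof (proj1 (Nat.log2_spec m ltac:(lia))).
  replace (S l) with (Nat.log2 m) in * by (unfold l; lia).
  lia.
Qed.

Fixpoint coef_abs_sum (P : list R) : R :=
  match P with [] => 0 | a :: P' => Rabs a + coef_abs_sum P' end.

Lemma coef_abs_sum_ge0 P : 0 <= coef_abs_sum P.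
Proof. induction P; simpl; [|pose proof (Rabs_pos a)]; lra. Qed.

Lemma poly_eval_abs_le P x :
  1 <= x -> Rabs (poly_eval P x) <= coef_abs_sum P * x ^ length P.
Proof.
  intros Hx; induction P as [|a P IH]; simpl.
  - rewrite Rabs_R0; lra.
  - pose proof (pow_R1_Rle x (length P) Hx).
    pose proof (coef_abs_sum_ge0 P); pose proof (Rabs_pos a).
    eapply Rle_trans; [apply Rabs_triang|].
    rewrite Rabs_mult, (Rabs_right x) by lra.
    assert (x * Rabs (poly_eval P x) <= x * (coef_abs_sum P * x ^ length P))
      by (apply Rmult_le_compat_l; lra).
    assert (Rabs a * 1 <= Rabs a * (x * x ^ length P))
      by (apply Rmult_le_compat_l; nra).
    nra.
Qed.

Lemma poly_eval_le_pow P : exists D N, forall n : nat, (N <= n)%nat ->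
  poly_eval P (INR n) <= INR (n ^ D).
Proof.
  destruct (INR_archimed 1 (coef_abs_sum P + 1) ltac:(lra)) as [N HN].
  exists (S (length P)), N; intros n Hn.
  apply le_INR in Hn; rewrite Rmult_1_r in HN.
  assert (Hx : 1 <= INR n) by (pose proof (coef_abs_sum_ge0 P); lra).
  pose proof (poly_eval_abs_le P (INR n) Hx).
  pose proof (pow_R1_Rle (INR n) (length P) Hx).
  pose proof (Rle_abs (poly_eval P (INR n))).
  assert (coef_abs_sum P * INR n ^ length P <= INR n * INR n ^ length P)
    by (apply Rmult_le_compat_r; lra).
  rewrite pow_INR; simpl; lra.
Qed.

Lemma log2R_pow2 k : log2R (INR (2 ^ k)) = INR k.
Proof.
  unfold log2R; rewrite pow_INR, ln_pow by (simpl; lra).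
  replace (INR 2) with 2 by (simpl; lra).
  pose proof ln_lt_2; field; lra.
Qed.

Lemma pow2_le_of_log2R k X : (0 < X)%nat -> INR k <= log2R (INR X) -> (2 ^ k <= X)%nat.
Proof.
  intros HX Hk; unfold log2R in Hk; pose proof ln_lt_2.
  apply lt_0_INR in HX.
  apply INR_le; rewrite pow_INR; replace (INR 2) with 2 by (simpl; lra).
  assert (Hln : ln (2 ^ k) <= ln (INR X)).
  { rewrite ln_pow by lra.
    apply (Rmult_le_compat_r (ln 2)) in Hk; [|lra].
    unfold Rdiv in Hk; rewrite Rmult_assoc, Rinv_l, Rmult_1_r in Hk by lra; exact Hk. }
  destruct (Rle_lt_dec (2 ^ k) (INR X)) as [|Hlt]; auto.
  apply ln_increasing in Hlt; lra.
Qed.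

Definition tower (K D j : nat) : nat := 2 ^ 2 ^ (K + D * j).

Lemma tower_ge K D j : (K <= tower K D j)%nat.
Proof.
  unfold tower.
  pose proof (Nat.pow_gt_lin_r 2 (K + D * j) ltac:(lia)).
  pose proof (Nat.pow_gt_lin_r 2 (2 ^ (K + D * j)) ltac:(lia)); lia.
Qed.

Lemma tower_pow_lt K D i j : (1 <= K)%nat -> (i < j)%nat ->
  (S (tower K D i ^ D) < tower K D j)%nat.
Proof.
  intros HK Hij; unfold tower; set (x := (2 ^ (K + D * i))%nat).
  assert (Hx : (2 <= x)%nat)
    by (pose proof (Nat.pow_le_mono_r 2 1 (K + D * i) ltac:(lia) ltac:(lia)); simpl in *; lia).
  assert (HD : (D < 2 ^ D)%nat) by (apply Nat.pow_gt_lin_r; lia).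
  assert (Hexp : (x * D + 2 <= 2 ^ (K + D * j))%nat).
  { apply Nat.le_trans with (2 ^ (K + D * i + D))%nat.
    - rewrite Nat.pow_add_r; fold x; nia.
    - apply Nat.pow_le_mono_r; nia. }
  apply Nat.lt_le_trans with (2 ^ (x * D + 2))%nat.
  - rewrite <- Nat.pow_mul_r, Nat.pow_add_r; simpl.
    pose proof (Nat.pow_nonzero 2 (x * D)); lia.
  - apply Nat.pow_le_mono_r; lia.
Qed.

Lemma tower_advice_budget K D j L : (1 <= K)%nat -> (j <= K)%nat ->
  INR L <= log2R (log2R (log2R (INR (tower K D j)))) - INR (D + 3) ->
  (2 ^ S L <= K)%nat.
Proof.
  intros HK Hj HL; unfold tower in HL; rewrite !log2R_pow2 in HL.
  assert (Hpow : (2 ^ (L + (D + 3)) <= K + D * j)%nat)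
    by (apply pow2_le_of_log2R; [lia | rewrite plus_INR; lra]).
  assert (HD : (D < 2 ^ D)%nat) by (apply Nat.pow_gt_lin_r; lia).
  rewrite !Nat.pow_add_r in Hpow; simpl in *; nia.
Qed.

Theorem mainTheorem2 (phi : nat -> nat)
  (Hphi : forall M : nat, exists N : nat, forall n : nat, (N <= n)%nat -> (M <= phi n)%nat) :
  ~ (exists (f : nat -> list bool) (A : algo) (P : list R),
       (exists N : nat, forall n : nat, (N <= n)%nat ->
          INR (length (f n)) <= log2R (log2R (log2R (INR n))) - INR (phi n)) /\
       (exists N : nat, forall n : nat, (N <= n)%nat ->
          forall s : nat, (s < n)%nat ->
            ring_explores A (f n) n s (poly_eval P (INR n)))).
Proof.
  intros [f [A [P [[N1 Hlen] [N2 Hexp]]]]].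
  destruct (poly_eval_le_pow P) as [D [N3 HP]].
  destruct (Hphi (D + 3)%nat) as [N4 Hphi4].
  set (K := (N1 + N2 + N3 + N4 + 1)%nat).
  assert (Hbig : forall N j, (N <= K)%nat -> (N <= tower K D j)%nat)
    by (intros N j HN; pose proof (tower_ge K D j); lia).
  apply (short_bool_lists_not_injective (fun j => f (tower K D j)) K).
  - intros j Hj; apply (tower_advice_budget K D j _ ltac:(lia) Hj).
    pose proof (Hlen _ (Hbig N1 j ltac:(lia))).
    pose proof (le_INR _ _ (Hphi4 _ (Hbig N4 j ltac:(lia)))); lra.
  - intros i j [Hij _] Heq; simpl in Heq.
    pose proof (Hexp _ (Hbig N2 i ltac:(lia)) 0%nat (Hbig 1%nat i ltac:(lia))) as Hi.
    pose proof (Hexp _ (Hbig N2 j ltac:(lia)) 0%nat (Hbig 1%nat j ltac:(lia))) as Hj.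
    rewrite <- Heq in Hj.
    pose proof (ring_explores_size_bound _ _ _ _ _ _ _ _ Hi Hj).
    pose proof (HP _ (Hbig N3 i ltac:(lia))).
    pose proof (lt_INR _ _ (tower_pow_lt K D i j ltac:(lia) Hij)) as Hgap.
    rewrite S_INR in Hgap; lra.
Qed.
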